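(* Let $\mathcal{G}$ be a class of countable groups and $\mathcal{E}$ a class of countable Borel equivalence relations such that: (i) $\mathcal{G}$ is closed under taking subgroups and quotients; (ii) every group in $\mathcal{G}$ has at most countably many subgroups; (iii) $\mathcal{E}$ is closed under Borel reducibility (if $F\in\mathcal{E}$ and $E$ is a countable Borel equivalence relation with $E\le_B F$, then $E\in\mathcal{E}$) and under countable disjoint unions. If $E^X_G\in\mathcal{E}$ for every free Borel action of a group $G\in\mathcal{G}$ on a standard Borel space $X$, then $E^X_G\in\mathcal{E}$ for every Borel action of a group $G\in\mathcal{G}$ on a standard Borel space $X$.
   Context: $E^X_G$ denotes the orbit equivalence relation $x\mathrel{E^X_G}y\iff\exists g\in G\ (g\cdot x=y)$. $E\le_B F$ means there is a Borel map $f$ with $x\mathrel{E}y\iff f(x)\mathrel{F}f(y)$. A countable Borel equivalence relation is a Borel equivalence relation all of whose classes are countable. An action is free if $g\cdot x\ne x$ for all $x$ and all $g\neq 1_G$. *)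

From Stdlib Require Import Reals.
Open Scope R_scope.

Record MSpace := { mcar :> Type; msbl : (mcar -> Prop) -> Prop }.

Definition is_sigma {T : Type} (S : (T -> Prop) -> Prop) : Prop :=
  S (fun _ => True) /\
  (forall A, S A -> S (fun x => ~ A x)) /\
  (forall F : nat -> (T -> Prop), (forall n, S (F n)) -> S (fun x => exists n, F n x)).

Definition gen_sigma {T : Type} (G : (T -> Prop) -> Prop) (A : T -> Prop) : Prop :=
  forall S : (T -> Prop) -> Prop, is_sigma S -> (forall B, G B -> S B) -> S A.

Definition is_metric {T : Type} (d : T -> T -> R) : Prop :=
  (forall x y, 0 <= d x y) /\ (forall x y, d x y = 0 <-> x = y) /\
  (forall x y, d x y = d y x) /\ (forall x y z, d x z <= d x y + d y z).

Definition separable_metric {T : Type} (d : T -> T -> R) : Prop :=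
  exists s : nat -> T, forall x eps, 0 < eps -> exists n, d x (s n) < eps.

Definition complete_metric {T : Type} (d : T -> T -> R) : Prop :=
  forall u : nat -> T,
    (forall eps, 0 < eps -> exists N, forall m n, (N <= m)%nat -> (N <= n)%nat -> d (u m) (u n) < eps) ->
    exists l, forall eps, 0 < eps -> exists N, forall n, (N <= n)%nat -> d (u n) l < eps.

Definition metric_open {T : Type} (d : T -> T -> R) (U : T -> Prop) : Prop :=
  forall x, U x -> exists eps, 0 < eps /\ forall y, d x y < eps -> U y.

Definition standard (X : MSpace) : Prop :=
  exists d : X -> X -> R, is_metric d /\ separable_metric d /\ complete_metric d /\
    forall A, msbl X A <-> gen_sigma (metric_open d) A.

Definition prod_sigma {T U : Type} (SA : (T -> Prop) -> Prop) (SB : (U -> Prop) -> Prop)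
  : (T * U -> Prop) -> Prop :=
  gen_sigma (fun C => exists A B, SA A /\ SB B /\ forall p, C p <-> (A (fst p) /\ B (snd p))).

Definition measurable_map {T U : Type} (SA : (T -> Prop) -> Prop) (SB : (U -> Prop) -> Prop)
  (f : T -> U) : Prop :=
  forall B, SB B -> SA (fun x => B (f x)).

Definition borel_map (X Y : MSpace) (f : X -> Y) : Prop := measurable_map (msbl X) (msbl Y) f.

Definition is_equiv {T : Type} (E : T -> T -> Prop) : Prop :=
  (forall x, E x x) /\ (forall x y, E x y -> E y x) /\ (forall x y z, E x y -> E y z -> E x z).

Definition CBER (X : MSpace) (E : X -> X -> Prop) : Prop :=
  is_equiv E /\
  prod_sigma (msbl X) (msbl X) (fun p => E (fst p) (snd p)) /\
  (forall x, exists s : nat -> X, forall y, E x y -> exists n, s n = y).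

Definition borel_reducible (X Y : MSpace) (E : X -> X -> Prop) (F : Y -> Y -> Prop) : Prop :=
  exists f : X -> Y, borel_map X Y f /\ forall x y, E x y <-> F (f x) (f y).

Definition dunion_space (Xs : nat -> MSpace) : MSpace :=
  {| mcar := {n : nat & mcar (Xs n)};
     msbl := fun A => forall n, msbl (Xs n) (fun x => A (existT _ n x)) |}.

Definition dunion_rel (Xs : nat -> MSpace) (Es : forall n, Xs n -> Xs n -> Prop)
  : dunion_space Xs -> dunion_space Xs -> Prop :=
  fun p q => exists n (x y : Xs n), p = existT _ n x /\ q = existT _ n y /\ Es n x y.

Definition CBERClass := forall X : MSpace, (X -> X -> Prop) -> Prop.

Definition closed_under_reducibility (C : CBERClass) : Prop :=
  forall (X Y : MSpace) (E : X -> X -> Prop) (F : Y -> Y -> Prop),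
    standard X -> standard Y -> CBER X E -> CBER Y F ->
    C Y F -> borel_reducible X Y E F -> C X E.

Definition closed_under_countable_unions (C : CBERClass) : Prop :=
  forall (Xs : nat -> MSpace) (Es : forall n, Xs n -> Xs n -> Prop),
    (forall n, standard (Xs n) /\ CBER (Xs n) (Es n) /\ C (Xs n) (Es n)) ->
    C (dunion_space Xs) (dunion_rel Xs Es).

Record CGroup := {
  gcar :> Type;
  gmul : gcar -> gcar -> gcar;
  ginv : gcar -> gcar;
  gone : gcar;
  gmulA : forall x y z, gmul x (gmul y z) = gmul (gmul x y) z;
  gmul1l : forall x, gmul gone x = x;
  gmulVl : forall x, gmul (ginv x) x = gone;
  gcountable : exists s : nat -> gcar, forall g, exists n, s n = g
}.

Definition group_hom (G H : CGroup) (f : G -> H) : Prop :=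
  forall x y, f (gmul G x y) = gmul H (f x) (f y).

Definition is_subgroup (G : CGroup) (P : G -> Prop) : Prop :=
  P (gone G) /\ (forall x y, P x -> P y -> P (gmul G x y)) /\ (forall x, P x -> P (ginv G x)).

Definition GroupClass := CGroup -> Prop.

Definition closed_under_subgroups (C : GroupClass) : Prop :=
  forall (G H : CGroup) (f : H -> G), group_hom H G f ->
    (forall x y, f x = f y -> x = y) -> C G -> C H.

Definition closed_under_quotients (C : GroupClass) : Prop :=
  forall (G H : CGroup) (f : G -> H), group_hom G H f ->
    (forall h, exists g, f g = h) -> C G -> C H.

Definition countably_many_subgroups (G : CGroup) : Prop :=
  exists S : nat -> (G -> Prop), forall P, is_subgroup G P ->
    exists n, forall x, S n x <-> P x.

Definition is_action (G : CGroup) (X : MSpace) (a : G -> X -> X) : Prop :=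
  (forall x, a (gone G) x = x) /\ (forall g h x, a (gmul G g h) x = a g (a h x)).

(* Borel action: the map G x X -> X is Borel, G carrying the discrete sigma-algebra *)
Definition borel_action (G : CGroup) (X : MSpace) (a : G -> X -> X) : Prop :=
  is_action G X a /\
  measurable_map (prod_sigma (fun _ : G -> Prop => True) (msbl X)) (msbl X)
    (fun p => a (fst p) (snd p)).

Definition free_action (G : CGroup) (X : MSpace) (a : G -> X -> X) : Prop :=
  forall g x, g <> gone G -> a g x <> x.

Definition orbit_rel (G : CGroup) (X : MSpace) (a : G -> X -> X) : X -> X -> Prop :=
  fun x y => exists g, a g x = y.

From Stdlib Require Import Reals Lra Lia Arith Classical ClassicalEpsilon FunctionalExtensionality
  PropExtensionality ProofIrrelevance Eqdep ChoiceFacts Cantor.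

(** Let [H_0, H_1, ...] enumerate the subgroups of [G], and let [Z_n] be the Borel set of points
    whose stabilizer is exactly [H_n]. Every orbit meets some [Z_n]; sending [x] to the least such
    [n] and to the first translate [g_k x] lying in [Z_n] reduces [E^X_G] to the disjoint union over
    [n] of the orbit relations that [N(H_n)] induces on [Z_n]. There [N(H_n)] acts with stabilizers
    exactly [H_n], so the group [N(H_n)/H_n], which belongs to the class by closure under subgroups
    and quotients, acts freely. As [Z_n] need not be standard Borel by itself, we let [N(H_n)/H_n]
    act freely on the standard Borel space [N(H_n)/H_n x X], through the given action on [Z_n] and
    by translation of the first coordinate elsewhere; the free-action hypothesis and the closure of
    the class of relations under countable unions and reducibility finish the proof. *)

Lemma pred_ext {T : Type} (A B : T -> Prop) : (forall x, A x <-> B x) -> A = B.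
Proof.
  intros E; apply functional_extensionality; intros x; apply propositional_extensionality; auto.
Qed.

Lemma val_inj {A : Type} {P : A -> Prop} (u v : sig P) : proj1_sig u = proj1_sig v -> u = v.
Proof. apply eq_sig_hprop; intros; apply proof_irrelevance. Qed.

(** * Sigma-algebras *)

Section SigmaAlgebra.
Context {T : Type} (S : (T -> Prop) -> Prop) (HS : is_sigma S).

Lemma sigma_ext A B : S A -> (forall x, A x <-> B x) -> S B.
Proof. intros HA E; rewrite <- (pred_ext _ _ E); exact HA. Qed.

Lemma sigma_full : S (fun _ => True). Proof. apply HS. Qed.

Lemma sigma_compl A : S A -> S (fun x => ~ A x). Proof. apply HS. Qed.

Lemma sigma_union (F : nat -> T -> Prop) : (forall n, S (F n)) -> S (fun x => exists n, F n x).
Proof. apply HS. Qed.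

Lemma sigma_inter (F : nat -> T -> Prop) : (forall n, S (F n)) -> S (fun x => forall n, F n x).
Proof.
  intros HF; apply (sigma_ext (fun x => ~ exists n, ~ F n x)).
  - apply sigma_compl, sigma_union; intros n; apply sigma_compl, HF.
  - intros x; split; [intros H n; apply NNPP; eauto | intros H [n Hn]; auto].
Qed.

Lemma sigma_const (Q : Prop) : S (fun _ => Q).
Proof.
  destruct (classic Q) as [HQ | HQ].
  - apply (sigma_ext _ _ sigma_full); tauto.
  - apply (sigma_ext _ _ (sigma_compl _ sigma_full)); tauto.
Qed.

Lemma sigma_or A B : S A -> S B -> S (fun x => A x \/ B x).
Proof.
  intros HA HB; apply (sigma_ext (fun x => exists n, (if Nat.eqb n 0 then A else B) x)).
  - apply sigma_union; intros [|n]; auto.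
  - intros x; split; [intros [[|n] H]; auto | intros [H|H]; [exists 0%nat | exists 1%nat]; auto].
Qed.

Lemma sigma_and A B : S A -> S B -> S (fun x => A x /\ B x).
Proof.
  intros HA HB; apply (sigma_ext (fun x => ~ (~ A x \/ ~ B x))).
  - apply sigma_compl, sigma_or; apply sigma_compl; auto.
  - intros x; tauto.
Qed.

Lemma sigma_impl (Q : Prop) A : S A -> S (fun x => Q -> A x).
Proof.
  intros HA; apply (sigma_ext (fun x => ~ Q \/ A x)).
  - apply sigma_or; [apply sigma_const | exact HA].
  - intros x; tauto.
Qed.

Lemma sigma_iff (Q : Prop) A : S A -> S (fun x => A x <-> Q).
Proof.
  intros HA; apply (sigma_ext (fun x => (A x /\ Q) \/ (~ A x /\ ~ Q))).
  - apply sigma_or; apply sigma_and; auto using sigma_compl, sigma_const.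
  - intros x; tauto.
Qed.

Section CountableIndex.
Context {I : Type} (s : nat -> I) (Hs : forall i, exists n, s n = i).

Lemma sigma_exists (F : I -> T -> Prop) : (forall i, S (F i)) -> S (fun x => exists i, F i x).
Proof.
  intros HF; apply (sigma_ext (fun x => exists n, F (s n) x)); [apply sigma_union; auto|].
  intros x; split; [intros [n Hn]; eauto | intros [i Hi]; destruct (Hs i) as [n <-]; eauto].
Qed.

Lemma sigma_forall (F : I -> T -> Prop) : (forall i, S (F i)) -> S (fun x => forall i, F i x).
Proof.
  intros HF; apply (sigma_ext (fun x => forall n, F (s n) x)); [apply sigma_inter; auto|].
  intros x; split; [intros H i; destruct (Hs i) as [n <-]; auto | auto].
Qed.
End CountableIndex.
End SigmaAlgebra.

Lemma gen_sigma_is_sigma {T : Type} (G : (T -> Prop) -> Prop) : is_sigma (gen_sigma G).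
Proof.
  split; [|split].
  - intros S HS _; apply HS.
  - intros A HA S HS HG; apply HS, HA; auto.
  - intros F HF S HS HG; apply HS; intros n; apply HF; auto.
Qed.

Lemma gen_sigma_base {T : Type} (G : (T -> Prop) -> Prop) A : G A -> gen_sigma G A.
Proof. intros HA S _ HG; auto. Qed.

Lemma gen_sigma_min {T : Type} (G S : (T -> Prop) -> Prop) :
  is_sigma S -> (forall B, G B -> S B) -> forall A, gen_sigma G A -> S A.
Proof. intros HS HG A HA; apply HA; auto. Qed.

Lemma standard_is_sigma (X : MSpace) : standard X -> is_sigma (msbl X).
Proof.
  intros (d & _ & _ & _ & Hd).
  replace (msbl X) with (gen_sigma (metric_open d)); [apply gen_sigma_is_sigma|].
  symmetry; apply pred_ext; auto.
Qed.

Open Scope R_scope.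

Section Separation.
Context {T : Type} (d : T -> T -> R) (Hd : is_metric d) (s : nat -> T)
  (Hs : forall x eps, 0 < eps -> exists n, d x (s n) < eps).

Definition basic_ball (m j : nat) (y : T) : Prop := d (s m) y < / INR (S j).

Lemma basic_ball_open m j : metric_open d (basic_ball m j).
Proof.
  destruct Hd as (_ & _ & _ & Htri).
  intros x Hx; exists (/ INR (S j) - d (s m) x); split; [unfold basic_ball in Hx; lra|].
  intros y Hy; unfold basic_ball; specialize (Htri (s m) x y); lra.
Qed.

Lemma eq_basic_balls u v : u = v <-> forall j, exists m, basic_ball m j u /\ basic_ball m j v.
Proof.
  destruct Hd as (Hpos & H0 & Hsym & Htri); unfold basic_ball.
  assert (Hr : forall j, 0 < / INR (S j)) by (intros j; apply Rinv_0_lt_compat, lt_0_INR; lia).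
  split.
  - intros <- j; destruct (Hs u _ (Hr j)) as [m Hm]; exists m; rewrite Hsym; lra.
  - intros H; apply H0; destruct (Req_dec (d u v) 0) as [E|E]; auto.
    assert (P : 0 < d u v) by (specialize (Hpos u v); lra).
    destruct (archimed_cor1 (d u v / 2)) as (N & HN & HN0); [lra|].
    destruct (H (pred N)) as (m & H1 & H2); rewrite (Nat.succ_pred_pos N HN0) in H1, H2.
    specialize (Htri u (s m) v); rewrite (Hsym u (s m)) in Htri; lra.
Qed.
End Separation.

Close Scope R_scope.

Lemma standard_separated (X : MSpace) : standard X ->
  exists B : nat -> nat -> X -> Prop, (forall m j, msbl X (B m j)) /\
    forall u v, u = v <-> forall j, exists m, B m j u /\ B m j v.
Proof.
  intros (d & Hd & [s Hs] & _ & HX); exists (basic_ball d s); split.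
  - intros m j; apply HX, gen_sigma_base, basic_ball_open; auto.
  - apply eq_basic_balls; auto.
Qed.

Lemma measurable_eq (Z X : MSpace) (f g : Z -> X) :
  is_sigma (msbl Z) -> standard X -> borel_map Z X f -> borel_map Z X g ->
  msbl Z (fun z => f z = g z).
Proof.
  intros HZ HX Hf Hg; destruct (standard_separated X HX) as (B & HB & Hsep).
  apply (sigma_ext _ (fun z => forall j, exists m, B m j (f z) /\ B m j (g z))).
  - apply sigma_inter; auto; intros j; apply sigma_union; auto; intros m.
    apply sigma_and; [exact HZ | apply Hf | apply Hg]; auto.
  - intros z; symmetry; apply Hsep.
Qed.

Lemma measurable_graph (Z X : MSpace) (f : Z -> X) : standard X -> borel_map Z X f ->
  prod_sigma (msbl Z) (msbl X) (fun p => f (fst p) = snd p).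
Proof.
  intros HX Hf; destruct (standard_separated X HX) as (B & HB & Hsep).
  assert (HP := gen_sigma_is_sigma
    (fun C => exists A B, msbl Z A /\ msbl X B /\ forall p, C p <-> A (fst p) /\ B (snd p))).
  apply (sigma_ext _ (fun p => forall j, exists m, B m j (f (fst p)) /\ B m j (snd p))).
  - apply sigma_inter; auto; intros j; apply sigma_union; auto; intros m.
    apply gen_sigma_base; exists (fun z => B m j (f z)), (B m j).
    split; [apply Hf; auto|]; split; [auto | tauto].
  - intros p; symmetry; apply Hsep.
Qed.

Lemma prod_sigma_section {T U : Type} (SA : (T -> Prop) -> Prop) (SB : (U -> Prop) -> Prop)
  (HB : is_sigma SB) (C : T * U -> Prop) (t : T) :
  prod_sigma SA SB C -> SB (fun u => C (t, u)).
Proof.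
  apply (gen_sigma_min _ (fun C => SB (fun u => C (t, u)))).
  - split; [|split]; [apply HB | intros A HA; apply HB, HA | intros F HF; apply HB; auto].
  - intros C' (A & B & _ & HB' & E).
    apply (sigma_ext _ (fun u => A t /\ B u)).
    + apply sigma_and; [exact HB | apply sigma_const, HB | exact HB'].
    + intros u; rewrite (E (t, u)); tauto.
Qed.

Lemma prod_sigma_of_sections {T U : Type} (SB : (U -> Prop) -> Prop) (HB : is_sigma SB)
  (s : nat -> T) (Hs : forall t, exists n, s n = t) (C : T * U -> Prop) :
  (forall t, SB (fun u => C (t, u))) -> prod_sigma (fun _ : T -> Prop => True) SB C.
Proof.
  intros HC; apply (sigma_ext _ (fun p => exists n, fst p = s n /\ C (s n, snd p))).
  - apply sigma_union; [apply gen_sigma_is_sigma|]; intros n; apply gen_sigma_base.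
    exists (fun t => t = s n), (fun u => C (s n, u)); split; [|split]; auto; tauto.
  - intros [t u]; simpl; split; [intros [n [-> Hn]]; auto|].
    intros Htu; destruct (Hs t) as [n <-]; eauto.
Qed.

Lemma borel_action_map G X a : standard X -> borel_action G X a -> forall g, borel_map X X (a g).
Proof.
  intros HX [_ Ha] g B HB.
  exact (prod_sigma_section _ _ (standard_is_sigma X HX) (fun p => B (a (fst p) (snd p))) g (Ha B HB)).
Qed.

Lemma action_invK G X a : is_action G X a -> forall g x, a (ginv G g) (a g x) = x.
Proof. intros [H1 HM] g x; rewrite <- HM, gmulVl, H1; auto. Qed.

Lemma orbit_rel_CBER G X a : standard X -> borel_action G X a -> CBER X (orbit_rel G X a).
Proof.
  intros HX Ha; pose proof (proj1 Ha) as [H1 HM]; destruct (gcountable G) as [s Hs].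
  split; [|split].
  - split; [|split].
    + intros x; exists (gone G); auto.
    + intros x y [g <-]; exists (ginv G g); apply action_invK, Ha.
    + intros x y z [g <-] [h <-]; exists (gmul G h g); auto.
  - apply (sigma_exists _ (gen_sigma_is_sigma _) s Hs (fun g p => a g (fst p) = snd p)).
    intros g; apply measurable_graph, borel_action_map; auto.
  - intros x; exists (fun n => a (s n) x); intros y [g <-]; destruct (Hs g) as [n <-]; eauto.
Qed.

(** * Countable sums of standard Borel spaces *)

Definition image {U T : Type} (e : U -> T) (B : U -> Prop) (t : T) : Prop :=
  exists u, t = e u /\ B u.

Lemma image_is_sigma {U T : Type} (S : (T -> Prop) -> Prop) (e : U -> T) :
  is_sigma S -> (forall u v, e u = e v -> u = v) -> S (image e (fun _ => True)) ->
  is_sigma (fun B => S (image e B)).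
Proof.
  intros HS He Hr; split; [|split].
  - exact Hr.
  - intros A HA; apply (sigma_ext _ (fun t => image e (fun _ => True) t /\ ~ image e A t)).
    + apply sigma_and, sigma_compl; auto.
    + intros t; split.
      * intros [[u [-> _]] Hn]; exists u; split; auto; intros Au; apply Hn; exists u; auto.
      * intros [u [-> Hu]]; split; [exists u; auto|]; intros [v [E Hv]]; apply He in E; subst; auto.
  - intros F HF; apply (sigma_ext _ (fun t => exists n, image e (F n) t)); [apply sigma_union; auto|].
    intros t; split; [intros [n [u [-> Hu]]] | intros [u [-> [n Hu]]]]; [exists u | exists n, u]; eauto.
Qed.

Definition sum_space (I : Type) (Xs : I -> MSpace) : MSpace :=
  {| mcar := {i : I & mcar (Xs i)};
     msbl := fun A => forall i, msbl (Xs i) (fun x => A (existT _ i x)) |}.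

Definition sum_rel (I : Type) (Xs : I -> MSpace) (Es : forall i, Xs i -> Xs i -> Prop)
  : sum_space I Xs -> sum_space I Xs -> Prop :=
  fun p q => exists i (x y : Xs i), p = existT _ i x /\ q = existT _ i y /\ Es i x y.

Section SumSigma.
Context (I : Type) (Xs : I -> MSpace) (HXs : forall i, is_sigma (msbl (Xs i))).

Lemma sum_is_sigma : is_sigma (msbl (sum_space I Xs)).
Proof.
  split; [|split]; simpl.
  - intros i; apply HXs.
  - intros A HA i; apply HXs, HA.
  - intros F HF i; apply (sigma_union _ (HXs i) (fun n x => F n (existT _ i x))); intros n; apply HF.
Qed.

Lemma sum_image_msbl i A : msbl (Xs i) A -> msbl (sum_space I Xs) (image (existT _ i) A).
Proof.
  intros HA j; destruct (classic (j = i)) as [->|Hji].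
  - apply (sigma_ext _ _ _ HA); intros x; split; [intros Ax; exists x; auto|].
    intros [x' [E Hx]]; apply inj_pairT2 in E; subst; auto.
  - apply (sigma_ext _ (fun _ => False)); [apply sigma_const, HXs|].
    intros x; split; [tauto|]; intros [x' [E _]]; apply eq_sigT_fst in E; tauto.
Qed.

Definition diag_embed (i : I) (p : Xs i * Xs i) : sum_space I Xs * sum_space I Xs :=
  (existT _ i (fst p), existT _ i (snd p)).

Lemma diag_embed_prod_sigma i P : prod_sigma (msbl (Xs i)) (msbl (Xs i)) P ->
  prod_sigma (msbl (sum_space I Xs)) (msbl (sum_space I Xs)) (image (diag_embed i) P).
Proof.
  assert (Hrect : forall A B, msbl (Xs i) A -> msbl (Xs i) B ->
    prod_sigma (msbl (sum_space I Xs)) (msbl (sum_space I Xs))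
      (image (diag_embed i) (fun p => A (fst p) /\ B (snd p)))).
  { intros A B HA HB; apply gen_sigma_base.
    exists (image (existT _ i) A), (image (existT _ i) B).
    split; [apply sum_image_msbl; auto|]; split; [apply sum_image_msbl; auto|].
    intros [p q]; simpl; split.
    - intros [[x y] [E [Ax By]]]; injection E; intros -> ->; split; [exists x | exists y]; auto.
    - intros [[x [-> Ax]] [y [-> By]]]; exists (x, y); auto. }
  apply (gen_sigma_min _ (fun P => prod_sigma (msbl (sum_space I Xs)) (msbl (sum_space I Xs))
    (image (diag_embed i) P))).
  - apply image_is_sigma; [apply gen_sigma_is_sigma | |].
    + intros [x y] [x' y'] E; injection E; intros E2 E1.
      apply inj_pairT2 in E1, E2; subst; auto.
    + apply (sigma_ext _ _ _ (Hrect _ _ (sigma_full _ (HXs i)) (sigma_full _ (HXs i)))).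
      intros pq; split; intros [u [-> _]]; exists u; auto.
  - intros C (A & B & HA & HB & E); apply (sigma_ext _ _ _ (Hrect A B HA HB)).
    intros pq; split; intros [u [-> Hu]]; exists u; split; auto; apply E; auto.
Qed.

Lemma sum_rel_CBER (sI : nat -> I) (HsI : forall i, exists n, sI n = i) Es :
  (forall i, CBER (Xs i) (Es i)) -> CBER (sum_space I Xs) (sum_rel I Xs Es).
Proof.
  intros HE; split; [|split].
  - split; [|split].
    + intros [i x]; exists i, x, x; split; [|split]; auto.
      destruct (HE i) as ((Hrefl & _) & _); auto.
    + intros p q (i & x & y & -> & -> & Hxy); exists i, y, x; split; [|split]; auto.
      destruct (HE i) as ((_ & Hsym & _) & _); auto.
    + intros p q r (i & x & y & -> & E1 & Hxy) (j & y' & z & E2 & -> & Hyz).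
      rewrite E1 in E2; pose proof (eq_sigT_fst E2); subst j.
      apply inj_pairT2 in E2; subst y'; exists i, x, z; split; [|split]; auto.
      destruct (HE i) as ((_ & _ & Htr) & _); eauto.
  - apply (sigma_ext _ (fun pq => exists i, image (diag_embed i) (fun p => Es i (fst p) (snd p)) pq)).
    + apply (sigma_exists _ (gen_sigma_is_sigma _) sI HsI); intros i.
      apply diag_embed_prod_sigma, (HE i).
    + intros [p q]; simpl; split.
      * intros [i [[x y] [E Hxy]]]; injection E; intros -> ->; exists i, x, y; auto.
      * intros (i & x & y & -> & -> & Hxy); exists i, (x, y); auto.
  - intros [i x]; destruct (HE i) as (_ & _ & Hc); destruct (Hc x) as [s Hs].
    exists (fun n => existT _ i (s n)); intros q (j & x' & y & E1 & -> & Hxy).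
    pose proof (eq_sigT_fst E1); subst j; apply inj_pairT2 in E1; subst x'.
    destruct (Hs y Hxy) as [n <-]; eauto.
Qed.
End SumSigma.

Open Scope R_scope.

Lemma Rmin_1_bounds r : 0 <= r -> 0 <= Rmin 1 r <= 1 /\ Rmin 1 r <= r.
Proof. intros; unfold Rmin; destruct Rle_dec; lra. Qed.

Lemma Rmin_1_lt r eps : 0 <= r -> Rmin 1 r < Rmin eps 1 -> r < eps.
Proof. intros; unfold Rmin in *; repeat destruct Rle_dec; lra. Qed.

Lemma Rmin_pos_1 eps : 0 < eps -> 0 < Rmin eps 1.
Proof. intros; unfold Rmin; destruct Rle_dec; lra. Qed.

Section SumMetric.
Context (I : Type) (sI : nat -> I) (HsI : forall i, exists n, sI n = i) (Xs : I -> MSpace)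
  (d : forall i, Xs i -> Xs i -> R) (s : forall i, nat -> Xs i)
  (Hd : forall i, is_metric (d i))
  (Hs : forall i x eps, 0 < eps -> exists n, d i x (s i n) < eps)
  (Hc : forall i, complete_metric (d i))
  (HX : forall i A, msbl (Xs i) A <-> gen_sigma (metric_open (d i)) A).

Definition sum_dist (p q : sum_space I Xs) : R :=
  match p, q with existT _ i x, existT _ j y =>
    match excluded_middle_informative (i = j) with
    | left e => Rmin 1 (d j (eq_rect i (fun k => mcar (Xs k)) x j e) y)
    | right _ => 2 end end.

Lemma sum_dist_same i x y : sum_dist (existT _ i x) (existT _ i y) = Rmin 1 (d i x y).
Proof.
  simpl; destruct excluded_middle_informative as [e|n]; [|tauto].
  rewrite (UIP_refl _ _ e); reflexivity.
Qed.

Lemma sum_dist_diff i j x y : i <> j -> sum_dist (existT _ i x) (existT _ j y) = 2.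
Proof. intros H; simpl; destruct excluded_middle_informative; tauto. Qed.

Lemma sum_dist_cases p q :
  (exists i x y, p = existT _ i x /\ q = existT _ i y /\ sum_dist p q = Rmin 1 (d i x y)) \/
  (projT1 p <> projT1 q /\ sum_dist p q = 2).
Proof.
  destruct p as [i x], q as [j y]; destruct (classic (i = j)) as [<-|Hij].
  - left; exists i, x, y; rewrite sum_dist_same; auto.
  - right; rewrite sum_dist_diff; auto.
Qed.

Lemma sum_dist_ge0 p q : 0 <= sum_dist p q.
Proof.
  destruct (sum_dist_cases p q) as [(i & x & y & _ & _ & ->) | [_ ->]]; [|lra].
  apply Rmin_1_bounds, Hd.
Qed.

Lemma sum_dist_lt2 p q : sum_dist p q < 2 -> projT1 p = projT1 q.
Proof. destruct (sum_dist_cases p q) as [(i & x & y & -> & -> & _) | [_ ->]]; [auto | lra]. Qed.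

Lemma sum_dist_metric : is_metric sum_dist.
Proof.
  split; [exact sum_dist_ge0 | split; [|split]].
  - intros p q; destruct (sum_dist_cases p q) as [(i & x & y & -> & -> & ->) | [Hn ->]].
    + destruct (Hd i) as (Hpos & H0 & _); pose proof (Hpos x y).
      split; [intros E | intros E; apply inj_pairT2 in E; subst y].
      * f_equal; apply H0; unfold Rmin in E; destruct Rle_dec; lra.
      * rewrite (proj2 (H0 x x) eq_refl); unfold Rmin; destruct Rle_dec; lra.
    + split; [lra | intros ->; tauto].
  - intros p q; destruct (sum_dist_cases p q) as [(i & x & y & -> & -> & ->) | [Hn ->]].
    + rewrite sum_dist_same; destruct (Hd i) as (_ & _ & Hsym & _); rewrite Hsym; auto.
    + destruct (sum_dist_cases q p) as [(i & x & y & -> & -> & _) | [_ ->]]; [simpl in Hn|]; tauto.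
  - intros p q r; pose proof (sum_dist_ge0 p q); pose proof (sum_dist_ge0 q r).
    destruct (sum_dist_cases p r) as [(i & x & z & -> & -> & ->) | [Hn ->]].
    + destruct (Hd i) as (Hpos & _ & _ & Htri).
      pose proof (Rmin_1_bounds _ (Hpos x z)).
      destruct (sum_dist_cases (existT _ i x) q) as [(i' & x' & y & E & -> & ->) | [Hn ->]]; [|lra].
      pose proof (eq_sigT_fst E); subst i'; apply inj_pairT2 in E; subst x'.
      rewrite sum_dist_same; specialize (Htri x y z); pose proof (Hpos x y); pose proof (Hpos y z).
      unfold Rmin in *; repeat destruct Rle_dec; lra.
    + destruct (sum_dist_cases p q) as [(i & x & y & -> & -> & _) | [_ ->]]; [|lra].
      destruct (sum_dist_cases (existT _ i y) r) as [(j & y' & z & E & -> & _) | [_ ->]]; [|lra].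
      apply eq_sigT_fst in E; subst j; simpl in Hn; tauto.
Qed.

Lemma sum_dist_separable : separable_metric sum_dist.
Proof.
  exists (fun k => existT _ (sI (fst (of_nat k))) (s (sI (fst (of_nat k))) (snd (of_nat k)))).
  intros [i x] eps Heps; destruct (HsI i) as [a <-]; destruct (Hs (sI a) x eps Heps) as [b Hb].
  exists (to_nat (a, b)); rewrite cancel_of_to; cbn [fst snd]; rewrite sum_dist_same.
  pose proof (Rmin_1_bounds _ (proj1 (Hd (sI a)) x (s (sI a) b))); lra.
Qed.

Lemma sum_dist_complete : complete_metric sum_dist.
Proof.
  intros u Hu; destruct (Hu 1) as [N HN]; [lra|]; set (i := projT1 (u N)).
  assert (Hi : forall k, exists x, u (N + k)%nat = existT _ i x).
  { intros k; assert (E : projT1 (u (N + k)%nat) = i).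
    { symmetry; apply sum_dist_lt2.
      assert (sum_dist (u N) (u (N + k)%nat) < 1) by (apply HN; lia); lra. }
    destruct (u (N + k)%nat) as [j x]; simpl in E; subst j; eauto. }
  apply choice in Hi as [v Hv].
  destruct (Hc i v) as [l Hl].
  { intros eps Heps; destruct (Hu (Rmin eps 1) (Rmin_pos_1 _ Heps)) as [M HM].
    exists M; intros m n Hm Hn; apply Rmin_1_lt; [apply Hd|].
    rewrite <- sum_dist_same, <- !Hv; apply HM; lia. }
  exists (existT _ i l); intros eps Heps; destruct (Hl eps Heps) as [K HK].
  exists (N + K)%nat; intros n Hn; replace n with (N + (n - N))%nat by lia.
  rewrite Hv, sum_dist_same; specialize (HK (n - N)%nat ltac:(lia)).
  pose proof (Rmin_1_bounds _ (proj1 (Hd i) (v (n - N)%nat) l)); lra.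
Qed.

Lemma sum_dist_borel i B : msbl (Xs i) B -> gen_sigma (metric_open sum_dist) (image (existT _ i) B).
Proof.
  intros HB; apply HX in HB; revert B HB.
  apply (gen_sigma_min _ (fun B => gen_sigma (metric_open sum_dist) (image (existT _ i) B))).
  - apply image_is_sigma; [apply gen_sigma_is_sigma | intros x y; apply inj_pairT2 |].
    apply gen_sigma_base; intros p [x [-> _]]; exists 1; split; [lra|].
    intros [j y] Hy; pose proof (sum_dist_lt2 (existT _ i x) (existT _ j y) ltac:(lra)) as E.
    simpl in E; subst j; exists y; auto.
  - intros U HU; apply gen_sigma_base; intros p [x [-> Ux]].
    destruct (HU x Ux) as (eps & Heps & Hball); exists (Rmin eps 1); split; [apply Rmin_pos_1; auto|].
    intros [j y] Hy; assert (Rmin eps 1 <= 1) by apply Rmin_r.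
    pose proof (sum_dist_lt2 (existT _ i x) (existT _ j y) ltac:(lra)) as E; simpl in E; subst j.
    rewrite sum_dist_same in Hy; exists y; split; auto; apply Hball, Rmin_1_lt; auto; apply Hd.
Qed.

Lemma sum_dist_borel_sets A : msbl (sum_space I Xs) A <-> gen_sigma (metric_open sum_dist) A.
Proof.
  assert (HXs : forall i, is_sigma (msbl (Xs i))).
  { intros i; replace (msbl (Xs i)) with (gen_sigma (metric_open (d i))); [apply gen_sigma_is_sigma|].
    symmetry; apply pred_ext; auto. }
  split.
  - intros HA; apply (sigma_ext _ (fun p => exists n, image (existT _ (sI n)) (fun x => A (existT _ (sI n) x)) p)).
    + apply sigma_union; [apply gen_sigma_is_sigma|]; intros n; apply sum_dist_borel, HA.
    + intros [i x]; split; [intros [n [x' [-> Hx]]]; auto|].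
      intros Hx; destruct (HsI i) as [n <-]; exists n, x; auto.
  - revert A; apply gen_sigma_min; [apply sum_is_sigma; auto|].
    intros U HU i; apply HX, gen_sigma_base; intros x Ux.
    destruct (HU _ Ux) as (eps & Heps & Hball); exists eps; split; auto.
    intros y Hy; apply Hball; rewrite sum_dist_same.
    pose proof (Rmin_1_bounds _ (proj1 (Hd i) x y)); lra.
Qed.
End SumMetric.

Close Scope R_scope.

Lemma sum_standard (I : Type) (Xs : I -> MSpace) :
  (exists sI : nat -> I, forall i, exists n, sI n = i) -> (forall i, standard (Xs i)) ->
  standard (sum_space I Xs).
Proof.
  intros [sI HsI] HXs; apply (non_dep_dep_functional_choice choice) in HXs as [d Hd].
  assert (Hs : forall i, exists s : nat -> Xs i, forall x eps, (0 < eps)%R -> exists n, (d i x (s n) < eps)%R)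
    by (intros i; apply Hd).
  apply (non_dep_dep_functional_choice choice) in Hs as [s Hs].
  exists (sum_dist I Xs d); split; [|split; [|split]].
  - apply sum_dist_metric; apply Hd.
  - apply (sum_dist_separable I sI HsI Xs d s); auto; apply Hd.
  - apply (sum_dist_complete I Xs d); apply Hd.
  - apply (sum_dist_borel_sets I sI HsI Xs d); apply Hd.
Qed.

(** * Subgroups and quotients of countable groups *)

Section GroupLaws.
Context (G : CGroup).
Local Notation "x * y" := (gmul G x y).
Local Notation "x ^-1" := (ginv G x) (at level 3).
Local Notation "1" := (gone G).

Lemma mulgV x : x * x^-1 = 1.
Proof.
  rewrite <- (gmul1l G (x * x^-1)), <- (gmulVl G (x^-1)) at 1.
  rewrite <- gmulA, (gmulA G (x^-1) x), gmulVl, gmul1l, gmulVl; reflexivity.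
Qed.

Lemma mulg1 x : x * 1 = x.
Proof. rewrite <- (gmulVl G x), gmulA, mulgV, gmul1l; reflexivity. Qed.

Lemma mulKg x y : x^-1 * (x * y) = y.
Proof. rewrite gmulA, gmulVl, gmul1l; reflexivity. Qed.

Lemma mulKVg x y : x * (x^-1 * y) = y.
Proof. rewrite gmulA, mulgV, gmul1l; reflexivity. Qed.

Lemma mulgI x y z : x * y = x * z -> y = z.
Proof. intros E; rewrite <- (mulKg x y), E, mulKg; reflexivity. Qed.

Lemma mulIg x y z : y * x = z * x -> y = z.
Proof.
  intros E; rewrite <- (mulg1 y), <- (mulgV x), gmulA, E, <- gmulA, mulgV, mulg1; reflexivity.
Qed.

Lemma invg_unique x y : x * y = 1 -> y = x^-1.
Proof. intros E; apply (mulgI x); rewrite E, mulgV; reflexivity. Qed.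

Lemma invgK x : (x^-1)^-1 = x.
Proof. symmetry; apply invg_unique, gmulVl. Qed.

Lemma invgM x y : (x * y)^-1 = y^-1 * x^-1.
Proof.
  symmetry; apply invg_unique.
  rewrite <- gmulA, (gmulA G y), mulgV, gmul1l, mulgV; reflexivity.
Qed.

Lemma invg1 : 1^-1 = 1.
Proof. symmetry; apply invg_unique, gmul1l. Qed.

Lemma trivial_subgroup : is_subgroup G (fun g => g = 1).
Proof.
  split; [|split]; [reflexivity | intros x y -> ->; apply gmul1l | intros x ->; apply invg1].
Qed.
End GroupLaws.

Section Subgroup.
Context (G : CGroup) (P : G -> Prop) (HP : is_subgroup G P).
Local Notation "x * y" := (gmul G x y).
Local Notation "x ^-1" := (ginv G x) (at level 3).
Local Notation "1" := (gone G).

Let sub_one : {g | P g} := exist _ 1 (proj1 HP).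
Let sub_mul (x y : {g | P g}) : {g | P g} :=
  exist _ (proj1_sig x * proj1_sig y) (proj1 (proj2 HP) _ _ (proj2_sig x) (proj2_sig y)).
Let sub_inv (x : {g | P g}) : {g | P g} := exist _ ((proj1_sig x)^-1) (proj2 (proj2 HP) _ (proj2_sig x)).

Let sub_mulA x y z : sub_mul x (sub_mul y z) = sub_mul (sub_mul x y) z.
Proof. apply val_inj, gmulA. Qed.
Let sub_mul1l x : sub_mul sub_one x = x.
Proof. apply val_inj, gmul1l. Qed.
Let sub_mulVl x : sub_mul (sub_inv x) x = sub_one.
Proof. apply val_inj, gmulVl. Qed.

Let sub_countable : exists s : nat -> {g | P g}, forall x, exists n, s n = x.
Proof.
  destruct (gcountable G) as [s Hs].
  exists (fun n => match excluded_middle_informative (P (s n)) with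
                   | left p => exist _ (s n) p | right _ => sub_one end).
  intros x; destruct (Hs (proj1_sig x)) as [n En]; exists n.
  destruct excluded_middle_informative as [p|p]; [apply val_inj; auto|].
  rewrite En in p; destruct (p (proj2_sig x)).
Qed.

Definition subgroup_group : CGroup :=
  Build_CGroup {g | P g} sub_mul sub_inv sub_one sub_mulA sub_mul1l sub_mulVl sub_countable.

Lemma subgroup_group_in_class (CG : GroupClass) :
  closed_under_subgroups CG -> CG G -> CG subgroup_group.
Proof.
  intros Hsub HG; apply (Hsub G subgroup_group (@proj1_sig _ _)); auto.
  - intros x y; reflexivity.
  - intros x y; apply val_inj.
Qed.
End Subgroup.

Section Quotient.
Context (G : CGroup) (K : G -> Prop) (HK : is_subgroup G K).
Local Notation "x * y" := (gmul G x y).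
Local Notation "x ^-1" := (ginv G x) (at level 3).
Local Notation "1" := (gone G).
Hypothesis K_normal : forall g k, K k -> K (g^-1 * (k * g)).

Let K1 : K 1 := proj1 HK.
Let KM : forall x y, K x -> K y -> K (x * y) := proj1 (proj2 HK).
Let KV : forall x, K x -> K (x^-1) := proj2 (proj2 HK).

Definition coset_rep (g : G) : G := epsilon (inhabits 1) (fun r => exists k, K k /\ r = g * k).

Lemma coset_rep_spec g : exists k, K k /\ coset_rep g = g * k.
Proof.
  apply (epsilon_spec (inhabits 1) (fun r => exists k, K k /\ r = g * k)).
  exists g, 1; rewrite mulg1; auto.
Qed.

Lemma coset_rep_eq a b : K (a^-1 * b) -> coset_rep a = coset_rep b.
Proof.
  intros Hab; unfold coset_rep; f_equal; apply pred_ext; intros r; split.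
  - intros [k [Hk ->]]; exists (b^-1 * (a * k)); split.
    + replace (b^-1 * (a * k)) with ((a^-1 * b)^-1 * k); [apply KM; auto|].
      rewrite invgM, invgK, <- gmulA; reflexivity.
    + rewrite mulKVg; reflexivity.
  - intros [k [Hk ->]]; exists ((a^-1 * b) * k); split; [apply KM; auto|].
    rewrite <- gmulA, mulKVg; reflexivity.
Qed.

Lemma coset_rep_mul a b : coset_rep (coset_rep a * coset_rep b) = coset_rep (a * b).
Proof.
  apply coset_rep_eq; destruct (coset_rep_spec a) as [h [Hh ->]], (coset_rep_spec b) as [k [Hk ->]].
  rewrite !invgM, <- !gmulA, mulKg; apply KM; [apply KV | apply K_normal, KV]; auto.
Qed.

Lemma coset_rep_idem a : coset_rep (coset_rep a) = coset_rep a.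
Proof.
  apply coset_rep_eq; destruct (coset_rep_spec a) as [k [Hk ->]].
  rewrite invgM, <- gmulA, gmulVl, mulg1; auto.
Qed.

Definition quot_proj (g : G) : {r | coset_rep r = r} := exist _ (coset_rep g) (coset_rep_idem g).

Lemma quot_eq_one (x : {r | coset_rep r = r}) : K (proj1_sig x) -> x = quot_proj 1.
Proof.
  intros Hx; apply val_inj; simpl; rewrite <- (proj2_sig x); apply coset_rep_eq.
  rewrite mulg1; apply KV, Hx.
Qed.

Let quot_mul (x y : {r | coset_rep r = r}) := quot_proj (proj1_sig x * proj1_sig y).
Let quot_inv (x : {r | coset_rep r = r}) := quot_proj ((proj1_sig x)^-1).

Lemma quot_proj_val x : quot_proj (proj1_sig x) = x.
Proof. apply val_inj, (proj2_sig x). Qed.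

Lemma quot_proj_mul a b : quot_proj (a * b) = quot_mul (quot_proj a) (quot_proj b).
Proof. apply val_inj; simpl; symmetry; apply coset_rep_mul. Qed.

Let quot_mulA x y z : quot_mul x (quot_mul y z) = quot_mul (quot_mul x y) z.
Proof.
  rewrite <- (quot_proj_val x), <- (quot_proj_val y), <- (quot_proj_val z), <- !quot_proj_mul.
  rewrite gmulA; reflexivity.
Qed.
Let quot_mul1l x : quot_mul (quot_proj 1) x = x.
Proof. rewrite <- (quot_proj_val x), <- quot_proj_mul, gmul1l; reflexivity. Qed.
Let quot_mulVl x : quot_mul (quot_inv x) x = quot_proj 1.
Proof. rewrite <- (quot_proj_val x) at 2; unfold quot_inv; rewrite <- quot_proj_mul, gmulVl; reflexivity. Qed.

Let quot_countable : exists s : nat -> {r | coset_rep r = r}, forall x, exists n, s n = x.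
Proof.
  destruct (gcountable G) as [s Hs]; exists (fun n => quot_proj (s n)).
  intros x; destruct (Hs (proj1_sig x)) as [n En]; exists n; rewrite En; apply quot_proj_val.
Qed.

Definition quotient_group : CGroup :=
  Build_CGroup {r | coset_rep r = r} quot_mul quot_inv (quot_proj 1)
    quot_mulA quot_mul1l quot_mulVl quot_countable.

Lemma quotient_group_in_class (CG : GroupClass) :
  closed_under_quotients CG -> CG G -> CG quotient_group.
Proof.
  intros Hquo HG; apply (Hquo G quotient_group quot_proj); auto.
  - exact quot_proj_mul.
  - intros x; exists (proj1_sig x); apply quot_proj_val.
Qed.
End Quotient.

Section NormalizerQuotient.
Context (G : CGroup) (H : G -> Prop) (HH : is_subgroup G H).
Local Notation "x * y" := (gmul G x y).
Local Notation "x ^-1" := (ginv G x) (at level 3).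
Local Notation "1" := (gone G).

Let H1 : H 1 := proj1 HH.
Let HM : forall x y, H x -> H y -> H (x * y) := proj1 (proj2 HH).
Let HV : forall x, H x -> H (x^-1) := proj2 (proj2 HH).

Definition normalizes (g : G) : Prop := forall k, H k <-> H (g^-1 * (k * g)).

Lemma normalizer_subgroup : is_subgroup G normalizes.
Proof.
  split; [|split].
  - intros k; rewrite invg1, gmul1l, mulg1; tauto.
  - intros x y Hx Hy k; rewrite invgM, (Hx k), (Hy (x^-1 * (k * x))), <- !gmulA; tauto.
  - intros x Hx k; rewrite invgK, (Hx (x * (k * x^-1))), <- !gmulA, mulKg, gmulVl, mulg1; tauto.
Qed.

Let N : CGroup := subgroup_group G normalizes normalizer_subgroup.

Local Notation H_N := (fun x : N => H (proj1_sig x)).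

Let H_in_N : is_subgroup N H_N.
Proof. split; [|split]; [exact H1 | intros x y; apply HM | intros x; apply HV]. Qed.

Let H_normal_in_N (g k : N) : H (proj1_sig k) -> H (proj1_sig (gmul N (ginv N g) (gmul N k g))).
Proof. apply (proj2_sig g). Qed.

Definition normalizer_quotient : CGroup := quotient_group N H_N H_in_N H_normal_in_N.

Definition nq_val (q : normalizer_quotient) : G := proj1_sig (proj1_sig q).

Lemma nq_val_normalizes q : normalizes (nq_val q).
Proof. exact (proj2_sig (proj1_sig q)). Qed.

Lemma nq_val_mul x y : exists k, H k /\
  nq_val (gmul normalizer_quotient x y) = nq_val x * nq_val y * k.
Proof.
  destruct (coset_rep_spec N H_N H_in_N (gmul N (proj1_sig x) (proj1_sig y))) as [k [Hk E]].
  exists (proj1_sig k); split; auto.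
  change (proj1_sig (coset_rep N H_N (gmul N (proj1_sig x) (proj1_sig y))) = nq_val x * nq_val y * proj1_sig k).
  rewrite E; reflexivity.
Qed.

Lemma nq_val_one : H (nq_val (gone normalizer_quotient)).
Proof.
  destruct (coset_rep_spec N H_N H_in_N (gone N)) as [k [Hk E]].
  change (H (proj1_sig (coset_rep N H_N (gone N)))); rewrite E; simpl; rewrite gmul1l; exact Hk.
Qed.

Lemma nq_eq_one q : H (nq_val q) -> q = gone normalizer_quotient.
Proof. exact (quot_eq_one N H_N H_in_N q). Qed.

Lemma nq_lift g : normalizes g -> exists q k, H k /\ nq_val q = g * k.
Proof.
  intros Hg; exists (quot_proj N H_N H_in_N (exist _ g Hg)).
  destruct (coset_rep_spec N H_N H_in_N (exist _ g Hg)) as [k [Hk E]].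
  exists (proj1_sig k); split; auto.
  change (proj1_sig (coset_rep N H_N (exist _ g Hg)) = g * proj1_sig k); rewrite E; reflexivity.
Qed.

Lemma normalizer_quotient_in_class (CG : GroupClass) :
  closed_under_subgroups CG -> closed_under_quotients CG -> CG G -> CG normalizer_quotient.
Proof.
  intros Hsub Hquo HG; apply (quotient_group_in_class N H_N H_in_N H_normal_in_N CG Hquo).
  apply subgroup_group_in_class; auto.
Qed.
End NormalizerQuotient.

Definition is_least (P : nat -> Prop) (n : nat) : Prop := P n /\ forall m, m < n -> ~ P m.

Definition least (P : nat -> Prop) : nat := epsilon (inhabits 0) (is_least P).

Lemma least_exists (P : nat -> Prop) n : P n -> exists m, is_least P m.
Proof.
  induction n as [n IH] using (well_founded_induction lt_wf); intros Pn.
  destruct (classic (exists k, k < n /\ P k)) as [[k [Hk Pk]] | Hno]; [exact (IH k Hk Pk)|].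
  exists n; split; auto; intros k Hk Pk; apply Hno; eauto.
Qed.

Lemma least_spec (P : nat -> Prop) : (exists n, P n) -> is_least P (least P).
Proof. intros [n Pn]; apply (epsilon_spec (inhabits 0) (is_least P)), (least_exists P n Pn). Qed.

Lemma least_eq (P : nat -> Prop) n : (exists m, P m) -> least P = n <-> is_least P n.
Proof.
  intros HP; destruct (least_spec P HP) as [Hl Hmin]; split; [intros <-; split; auto|].
  intros [Pn Hn]; destruct (Nat.lt_trichotomy (least P) n) as [L | [E | L]]; auto.
  - destruct (Hn _ L Hl).
  - destruct (Hmin _ L Pn).
Qed.

Lemma least_ext (P Q : nat -> Prop) : (forall n, P n <-> Q n) -> least P = least Q.
Proof. intros E; rewrite (pred_ext P Q E); reflexivity. Qed.

Lemma sigma_is_least {T : Type} (S : (T -> Prop) -> Prop) (P : nat -> T -> Prop) n :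
  is_sigma S -> (forall m, S (P m)) -> S (fun x => is_least (fun m => P m x) n).
Proof.
  intros HS HP; unfold is_least; apply sigma_and; auto.
  apply sigma_inter; auto; intros m; apply sigma_impl, sigma_compl; auto.
Qed.

(** * A free action of N(H)/H *)

Section FreeAction.
Context (G : CGroup) (X : MSpace) (a : G -> X -> X) (HX : standard X) (Ha : borel_action G X a)
  (H : G -> Prop) (HH : is_subgroup G H).
Local Notation "x * y" := (gmul G x y).
Local Notation "x ^-1" := (ginv G x) (at level 3).
Local Notation "1" := (gone G).

Let Ha1 : forall x, a 1 x = x := proj1 (proj1 Ha).
Let HaM : forall g h x, a (g * h) x = a g (a h x) := proj2 (proj1 Ha).

Lemma act_fixed_conj k g x : a k (a g x) = a g x <-> a (g^-1 * (k * g)) x = x.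
Proof.
  rewrite !HaM; split; [intros E; rewrite E; apply action_invK, Ha|].
  intros E; rewrite <- E at 2; rewrite <- (HaM g (g^-1)), mulgV, Ha1; reflexivity.
Qed.

Definition stab_eq (x : X) : Prop := forall g, a g x = x <-> H g.

Lemma stab_eq_msbl : msbl X stab_eq.
Proof.
  destruct (gcountable G) as [s Hs]; pose proof (standard_is_sigma X HX) as HS.
  apply (sigma_forall _ HS s Hs (fun g x => a g x = x <-> H g)); intros g.
  apply sigma_iff, measurable_eq; auto; [apply borel_action_map; auto | intros B HB; exact HB].
Qed.

Lemma stab_eq_translate g x : normalizes G H g -> stab_eq x -> stab_eq (a g x).
Proof. intros Hg Hx k; rewrite act_fixed_conj, (Hx (g^-1 * (k * g))); symmetry; apply Hg. Qed.

Local Notation Q := (normalizer_quotient G H HH).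

Definition free_space : MSpace := sum_space Q (fun _ => X).

Definition free_act (q : Q) (y : free_space) : free_space :=
  match y with existT _ d x =>
    match excluded_middle_informative (stab_eq x) with
    | left _ => existT (fun _ => mcar X) d (a (nq_val G H HH q) x)
    | right _ => existT (fun _ => mcar X) (gmul Q q d) x end end.

Lemma free_act_stab q d x : stab_eq x ->
  free_act q (existT _ d x) = existT (fun _ => mcar X) d (a (nq_val G H HH q) x).
Proof. intros Hx; simpl; destruct excluded_middle_informative; tauto. Qed.

Lemma free_act_not_stab q d x : ~ stab_eq x ->
  free_act q (existT _ d x) = existT (fun _ => mcar X) (gmul Q q d) x.
Proof. intros Hx; simpl; destruct excluded_middle_informative; tauto. Qed.

Lemma free_act_is_action : is_action Q free_space free_act.
Proof.
  split.
  - intros [d x]; destruct (classic (stab_eq x)) as [Hx | Hx].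
    + rewrite free_act_stab; auto; f_equal; apply Hx, nq_val_one.
    + rewrite free_act_not_stab, gmul1l; auto.
  - intros q r [d x]; destruct (classic (stab_eq x)) as [Hx | Hx].
    + assert (Hrx : stab_eq (a (nq_val G H HH r) x)) by (apply stab_eq_translate, Hx; apply nq_val_normalizes).
      rewrite !free_act_stab; auto; f_equal.
      destruct (nq_val_mul G H HH q r) as [k [Hk ->]]; rewrite !HaM, (proj2 (Hx k) Hk); reflexivity.
    + rewrite !free_act_not_stab, gmulA; auto.
Qed.

Lemma free_act_free : free_action Q free_space free_act.
Proof.
  intros q [d x] Hq E; apply Hq; destruct (classic (stab_eq x)) as [Hx | Hx].
  - rewrite free_act_stab in E; auto; apply inj_pairT2 in E.
    apply nq_eq_one, Hx, E.
  - rewrite free_act_not_stab in E; auto; apply eq_sigT_fst in E.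
    apply (mulIg Q d); rewrite gmul1l; exact E.
Qed.

Lemma free_space_standard : standard free_space.
Proof. apply sum_standard; [apply gcountable | intros; exact HX]. Qed.

Lemma free_act_borel : borel_action Q free_space free_act.
Proof.
  split; [apply free_act_is_action|].
  pose proof (standard_is_sigma X HX) as HS.
  destruct (gcountable Q) as [s Hs]; intros A HA.
  apply (prod_sigma_of_sections _ (standard_is_sigma _ free_space_standard) s Hs); intros q d.
  change (msbl X (fun x => A (free_act q (existT _ d x)))).
  apply (sigma_ext _ (fun x => (stab_eq x /\ A (existT _ d (a (nq_val G H HH q) x))) \/
                               (~ stab_eq x /\ A (existT _ (gmul Q q d) x)))).
  - apply sigma_or; [exact HS | |]; apply sigma_and; try exact HS.
    + apply stab_eq_msbl.
    + apply (borel_action_map G X a HX Ha _ (fun x => A (existT _ d x))), HA.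
    + apply sigma_compl, stab_eq_msbl; exact HS.
    + apply HA.
  - intros x; destruct (classic (stab_eq x)) as [Hx | Hx].
    + rewrite free_act_stab; tauto.
    + rewrite free_act_not_stab; tauto.
Qed.

Lemma free_act_orbit z z' : stab_eq z -> stab_eq z' ->
  orbit_rel Q free_space free_act (existT _ (gone Q) z) (existT _ (gone Q) z') <-> orbit_rel G X a z z'.
Proof.
  intros Hz Hz'; split.
  - intros [q Hq]; rewrite free_act_stab in Hq; auto.
    apply inj_pairT2 in Hq; exists (nq_val G H HH q); exact Hq.
  - intros [g <-].
    assert (Hg : normalizes G H g).
    { intros k; rewrite <- (Hz' k), act_fixed_conj, (Hz (g^-1 * (k * g))); reflexivity. }
    destruct (nq_lift G H HH g Hg) as (q & k & Hk & Eq).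
    exists q; rewrite free_act_stab, Eq, HaM, (proj2 (Hz k) Hk); auto.
Qed.
End FreeAction.

(** * Reduction to free actions *)

Definition enum_group (G : CGroup) : nat -> G :=
  proj1_sig (constructive_indefinite_description _ (gcountable G)).

Lemma enum_group_surj (G : CGroup) g : exists n, enum_group G n = g.
Proof. unfold enum_group; destruct constructive_indefinite_description as [s Hs]; apply Hs. Qed.

Section Reduction.
Context (G : CGroup) (X : MSpace) (a : G -> X -> X) (HX : standard X) (Ha : borel_action G X a)
  (S : nat -> G -> Prop) (HS : forall P, is_subgroup G P -> exists n, forall g, S n g <-> P g).
Local Notation "x * y" := (gmul G x y).
Local Notation "x ^-1" := (ginv G x) (at level 3).
Local Notation "1" := (gone G).

Let Ha1 : forall x, a 1 x = x := proj1 (proj1 Ha).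
Let HaM : forall g h x, a (g * h) x = a g (a h x) := proj2 (proj1 Ha).

Definition subgroup_at (n : nat) (g : G) : Prop :=
  (is_subgroup G (S n) /\ S n g) \/ (~ is_subgroup G (S n) /\ g = 1).

Lemma subgroup_at_subgroup n : is_subgroup G (subgroup_at n).
Proof.
  unfold subgroup_at; destruct (classic (is_subgroup G (S n))) as [Hs | Hs].
  - rewrite (pred_ext _ (S n)); [exact Hs | tauto].
  - rewrite (pred_ext _ (fun g => g = 1)); [apply trivial_subgroup | tauto].
Qed.

Definition stab_eq_at n : X -> Prop := stab_eq G X a (subgroup_at n).

Definition free_space_at n : MSpace := free_space G X (subgroup_at n) (subgroup_at_subgroup n).

Definition free_orbit_at n : free_space_at n -> free_space_at n -> Prop :=
  orbit_rel _ (free_space_at n) (free_act G X a (subgroup_at n) (subgroup_at_subgroup n)).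

Definition orbit_meets n (x : X) : Prop := exists g, stab_eq_at n (a g x).

Lemma orbit_meets_some x : exists n, orbit_meets n x.
Proof.
  assert (Hstab : is_subgroup G (fun g => a g x = x)).
  { split; [|split]; [apply Ha1 | intros g h Hg Hh; rewrite HaM, Hh, Hg; auto |].
    intros g Hg; rewrite <- Hg at 1; apply action_invK, Ha. }
  destruct (HS _ Hstab) as [n Hn]; exists n, 1; rewrite Ha1; intros g.
  unfold subgroup_at; rewrite (pred_ext _ _ Hn); tauto.
Qed.

Lemma orbit_meets_invariant n x y : orbit_rel G X a x y -> orbit_meets n x <-> orbit_meets n y.
Proof.
  intros [h <-]; split; intros [g Hg].
  - exists (g * h^-1); rewrite HaM, action_invK; auto; apply Ha.
  - exists (g * h); rewrite HaM; auto.
Qed.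

Definition level (x : X) : nat := least (fun n => orbit_meets n x).

Lemma level_invariant x y : orbit_rel G X a x y -> level x = level y.
Proof. intros Hxy; apply least_ext; intros n; apply orbit_meets_invariant, Hxy. Qed.

Lemma shift_exists x : exists k, stab_eq_at (level x) (a (enum_group G k) x).
Proof.
  destruct (least_spec _ (orbit_meets_some x)) as [[g Hg] _].
  destruct (enum_group_surj G g) as [k <-]; eauto.
Qed.

Definition shift (x : X) : nat := least (fun k => stab_eq_at (level x) (a (enum_group G k) x)).

Lemma shift_spec x : stab_eq_at (level x) (a (enum_group G (shift x)) x).
Proof. apply (least_spec (fun k => stab_eq_at (level x) (a (enum_group G k) x))), shift_exists. Qed.

Definition reduce (x : X) : dunion_space free_space_at :=
  existT _ (level x) (existT (fun _ => mcar X) (gone _) (a (enum_group G (shift x)) x)).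

Lemma reduce_at x n (E : level x = n) : reduce x =
  existT (fun n => mcar (free_space_at n)) n (existT (fun _ => mcar X) (gone _) (a (enum_group G (shift x)) x)).
Proof. subst n; reflexivity. Qed.

Lemma reduce_spec x y : orbit_rel G X a x y <-> dunion_rel free_space_at free_orbit_at (reduce x) (reduce y).
Proof.
  destruct (orbit_rel_CBER G X a HX Ha) as [[_ [Hsym Htr]] _].
  assert (Hshift : forall x, orbit_rel G X a x (a (enum_group G (shift x)) x)) by (intros z; eexists; reflexivity).
  split.
  - intros Hxy; assert (Ey : level y = level x) by (symmetry; apply level_invariant, Hxy).
    exists (level x), (existT _ (gone _) (a (enum_group G (shift x)) x)),
      (existT _ (gone _) (a (enum_group G (shift y)) y)).
    split; [reflexivity | split; [apply reduce_at, Ey|]].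
    apply (free_act_orbit G X a Ha); [apply shift_spec | rewrite <- Ey; apply shift_spec |].
    apply (Htr _ x); [apply Hsym, Hshift | apply (Htr _ y); auto].
  - intros (n & u & v & E1 & E2 & Huv).
    pose proof (eq_sigT_fst E1) as En; simpl in En; subst n.
    apply inj_pairT2 in E1; subst u.
    pose proof (eq_sigT_fst E2) as Ey; simpl in Ey.
    rewrite (reduce_at y _ Ey) in E2; apply inj_pairT2 in E2; subst v.
    apply (free_act_orbit G X a Ha) in Huv; [| apply shift_spec | rewrite <- Ey; apply shift_spec].
    apply (Htr _ _ _ (Hshift x)), (Htr _ _ _ Huv), Hsym, Hshift.
Qed.

Lemma reduce_borel : borel_map X (dunion_space free_space_at) reduce.
Proof.
  pose proof (standard_is_sigma X HX) as HSX.
  assert (Hmeets : forall n, msbl X (orbit_meets n)).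
  { intros n; apply (sigma_exists _ HSX _ (enum_group_surj G) (fun g x => stab_eq_at n (a g x))).
    intros g; apply (borel_action_map G X a HX Ha g), stab_eq_msbl; auto. }
  assert (Hshifted : forall n k, msbl X (fun x => stab_eq_at n (a (enum_group G k) x))).
  { intros n k; apply (borel_action_map G X a HX Ha), stab_eq_msbl; auto. }
  intros A HA.
  apply (sigma_ext _ (fun x => exists n k, is_least (fun n => orbit_meets n x) n /\
      is_least (fun k => stab_eq_at n (a (enum_group G k) x)) k /\
      A (existT _ n (existT (fun _ => mcar X) (gone _) (a (enum_group G k) x))))).
  - apply sigma_union; auto; intros n; apply sigma_union; auto; intros k.
    apply sigma_and; [auto | apply (sigma_is_least _ orbit_meets); auto|].
    apply sigma_and; [auto | apply (sigma_is_least _ (fun k x => stab_eq_at n (a (enum_group G k) x))); auto|].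
    apply (borel_action_map G X a HX Ha _ (fun z => A (existT _ n (existT (fun _ => mcar X) (gone _) z)))).
    apply (HA n).
  - intros x; split.
    + intros (n & k & Hn & Hk & HAx).
      assert (En : level x = n) by (apply least_eq; auto; apply orbit_meets_some).
      assert (Ek : shift x = k).
      { unfold shift; rewrite En; apply least_eq; auto; rewrite <- En; apply shift_exists. }
      rewrite (reduce_at x n En), Ek; exact HAx.
    + intros HAx; exists (level x), (shift x); split; [|split; [|exact HAx]].
      * apply least_spec, orbit_meets_some.
      * apply (least_spec (fun k => stab_eq_at (level x) (a (enum_group G k) x))), shift_exists.
Qed.
End Reduction.

Theorem proposition8p1 (CG : GroupClass) (CE : CBERClass)
  (hsub : closed_under_subgroups CG) (hquo : closed_under_quotients CG)
  (hcnt : forall G, CG G -> countably_many_subgroups G)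
  (hred : closed_under_reducibility CE) (huni : closed_under_countable_unions CE)
  (hfree : forall (G : CGroup) (X : MSpace) (a : G -> X -> X),
      CG G -> standard X -> borel_action G X a -> free_action G X a ->
      CE X (orbit_rel G X a)) :
  forall (G : CGroup) (X : MSpace) (a : G -> X -> X),
    CG G -> standard X -> borel_action G X a -> CE X (orbit_rel G X a).
Proof.
  intros G X a HG HX Ha; destruct (hcnt G HG) as [S HS].
  set (Ys := free_space_at G X S); set (Fs := free_orbit_at G X a S).
  assert (HYs : forall n, standard (Ys n)) by (intros n; apply free_space_standard, HX).
  assert (HFs : forall n, CBER (Ys n) (Fs n)).
  { intros n; apply orbit_rel_CBER; [apply HYs | apply free_act_borel; auto]. }
  apply (hred X (dunion_space Ys) _ (dunion_rel Ys Fs)); auto.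
  - apply sum_standard; [exists (fun n => n); eauto | exact HYs].
  - apply orbit_rel_CBER; auto.
  - apply (sum_rel_CBER nat Ys (fun n => standard_is_sigma _ (HYs n)) (fun n => n)); eauto.
  - apply huni; intros n; split; [|split]; auto.
    apply hfree; [apply normalizer_quotient_in_class; auto | auto | apply free_act_borel; auto | apply free_act_free].
  - exists (reduce G X a S); split; [apply reduce_borel | apply reduce_spec]; auto.
Qed.
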